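(* Let $\mathbb N$ be a strongly connected symmetric directed graph on $m$ vertices without self-arcs, with arc matrices $C_{ij}$ (each with $n$ columns) such that $\bar{\mathbb N}$ is well-configured. Let $\alpha(t)>0$, $t=0,1,2,\dots$, satisfy $\sum_t\alpha(t)=\infty$ and $\sum_t\alpha(t)^2<\infty$. For arbitrary $x_i(0)\in\mathbb R^n$, define for each agent $i$ $$x_i(t+1)=x_i(t)-\alpha(t)\sum_{j\in\mathcal N_i}\big(C_{ij}'C_{ij}+C_{ji}'C_{ji}\big)\big(x_i(t)-x_j(t)\big).$$ Then there exists $x^*\in\mathbb R^n$ such that $x_i(t)\to x^*$ as $t\to\infty$ for every $i$.
   Context: A directed graph is symmetric if whenever $(i,j)$ is an arc so is $(j,i)$. $\mathcal N_i$ is the set of neighbors $j$ of agent $i$ (those $j\ne i$ with $(j,i)$ an arc). Each arc $(j,i)$ carries a real matrix $C_{ji}$ with $n$ columns; $'$ denotes transpose. $\bar{\mathbb N}$ is well-configured if for all $x_1,\dots,x_m\in\mathbb R^n$, $C_{ji}x_i=C_{ji}x_j$ for every arc $(j,i)$ implies $x_1=\cdots=x_m$. *)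

From HB Require Import structures.
From mathcomp Require Import all_boot all_order all_algebra.
From mathcomp Require Import all_classical all_reals all_analysis.
Set Implicit Arguments. Unset Strict Implicit. Unset Printing Implicit Defensive.
Import Order.TTheory GRing.Theory Num.Theory.
Local Open Scope ring_scope.

(* A directed graph on vertices 'I_m is given by its arc relation:
   [arc j i] means (j,i) is an arc. *)
Definition symmetric_graph (m : nat) (arc : rel 'I_m) : Prop :=
  forall i j, arc i j -> arc j i.

Definition no_self_arcs (m : nat) (arc : rel 'I_m) : Prop :=
  forall i, ~~ arc i i.

Definition strongly_connected (m : nat) (arc : rel 'I_m) : Prop :=
  forall i j, connect arc i j.

Definition well_configured (R : realType) (m n : nat) (arc : rel 'I_m)
  (rows : 'I_m -> 'I_m -> nat) (C : forall j i, 'M[R]_(rows j i, n)) : Prop :=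
  forall xs : 'I_m -> 'cV[R]_n,
    (forall i j, arc j i -> C j i *m xs i = C j i *m xs j) ->
    forall i j, xs i = xs j.

From HB Require Import structures.
From mathcomp Require Import all_boot all_order all_algebra.
From mathcomp Require Import all_classical all_reals all_analysis.
From mathcomp Require Import ring lra.
Import Order.TTheory GRing.Theory Num.Theory.
Import numFieldNormedType.Exports.
Set Implicit Arguments. Unset Strict Implicit. Unset Printing Implicit Defensive.
Local Open Scope ring_scope.
Local Open Scope classical_set_scope.

(* The average of the agents is invariant, so the errors [y = x - xbar] have zero
   sum and evolve by [y(t+1) = y(t) - alpha(t) G y(t)], where [G] is the
   matrix-weighted Laplacian plus the map [y |-> sum_j y_j]; this [G] is
   self-adjoint and, because the network is well-configured, positive definite.
   Hence [c |y|^2 <= <y, G y>] and [|G y|^2 <= K |y|^2], so the energy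
   [V = |y|^2] satisfies [V(t+1) <= (1 - 2 c alpha + K alpha^2) V(t)].  Since
   [alpha -> 0] this is eventually a contraction by [1 - c alpha(t)], and
   [sum alpha = oo] drives [V] to [0]. *)

Section FrobeniusProduct.
Variable R : realFieldType.

Definition mxdot p q (A B : 'M[R]_(p, q)) : R := \tr (A^T *m B).

Lemma mxdotE p q (A B : 'M[R]_(p, q)) : mxdot A B = \sum_i \sum_j A i j * B i j.
Proof.
rewrite /mxdot /mxtrace exchange_big; apply: eq_bigr => j _.
by rewrite mxE; apply: eq_bigr => i _; rewrite mxE.
Qed.

Lemma mxdotC p q (A B : 'M[R]_(p, q)) : mxdot A B = mxdot B A.
Proof. by rewrite /mxdot -mxtrace_tr trmx_mul trmxK. Qed.

Lemma mxdotDr p q (A B D : 'M[R]_(p, q)) : mxdot A (B + D) = mxdot A B + mxdot A D.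
Proof. by rewrite /mxdot mulmxDr mxtraceD. Qed.

Lemma mxdotZr p q a (A B : 'M[R]_(p, q)) : mxdot A (a *: B) = a * mxdot A B.
Proof. by rewrite /mxdot -scalemxAr mxtraceZ. Qed.

Lemma mxdotNr p q (A B : 'M[R]_(p, q)) : mxdot A (- B) = - mxdot A B.
Proof. by rewrite -scaleN1r mxdotZr mulN1r. Qed.

Lemma mxdotBr p q (A B D : 'M[R]_(p, q)) : mxdot A (B - D) = mxdot A B - mxdot A D.
Proof. by rewrite mxdotDr mxdotNr. Qed.

Lemma mxdot0r p q (A : 'M[R]_(p, q)) : mxdot A 0 = 0.
Proof. by rewrite -(scale0r 0) mxdotZr mul0r. Qed.

Lemma mxdotDl p q (A B D : 'M[R]_(p, q)) : mxdot (B + D) A = mxdot B A + mxdot D A.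
Proof. by rewrite !(mxdotC _ A) mxdotDr. Qed.

Lemma mxdotZl p q a (A B : 'M[R]_(p, q)) : mxdot (a *: B) A = a * mxdot B A.
Proof. by rewrite !(mxdotC _ A) mxdotZr. Qed.

Lemma mxdotBl p q (A B D : 'M[R]_(p, q)) : mxdot (B - D) A = mxdot B A - mxdot D A.
Proof. by rewrite !(mxdotC _ A) mxdotBr. Qed.

Lemma mxdot_sumr p q I (r : seq I) (P : pred I) (F : I -> 'M[R]_(p, q)) (A : 'M[R]_(p, q)) :
  mxdot A (\sum_(i <- r | P i) F i) = \sum_(i <- r | P i) mxdot A (F i).
Proof. by rewrite /mxdot mulmx_sumr raddf_sum. Qed.

Lemma mxdot_suml p q I (r : seq I) (P : pred I) (F : I -> 'M[R]_(p, q)) (A : 'M[R]_(p, q)) :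
  mxdot (\sum_(i <- r | P i) F i) A = \sum_(i <- r | P i) mxdot (F i) A.
Proof. by rewrite mxdotC mxdot_sumr; apply: eq_bigr => i _; rewrite mxdotC. Qed.

Lemma sqr_le_mxdot p q (A : 'M[R]_(p, q)) i j : A i j ^+ 2 <= mxdot A A.
Proof.
have sqr_ge0' (a : R) : 0 <= a * a by rewrite -expr2 sqr_ge0.
rewrite mxdotE (bigD1 i) //= (bigD1 j) //= expr2 -addrA lerDl.
by rewrite addr_ge0 ?sumr_ge0 // => k _; rewrite sumr_ge0.
Qed.

Lemma mxdot_ge0 p q (A : 'M[R]_(p, q)) : 0 <= mxdot A A.
Proof.
by rewrite mxdotE sumr_ge0 // => i _; rewrite sumr_ge0 // => j _; rewrite -expr2 sqr_ge0.
Qed.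

Lemma mxdot_eq0 p q (A : 'M[R]_(p, q)) : (mxdot A A == 0) = (A == 0).
Proof.
apply/eqP/eqP => [A0|->]; last by rewrite mxdot0r.
apply/matrixP => i j; rewrite mxE; apply/eqP; rewrite -sqrf_eq0 eq_le sqr_ge0 andbT.
by rewrite -A0 sqr_le_mxdot.
Qed.

Lemma mxdot_mulmxr p q s (A : 'M[R]_(s, q)) (B : 'M[R]_(p, s)) (D : 'M[R]_(p, q)) :
  mxdot D (B *m A) = mxdot (B^T *m D) A.
Proof. by rewrite /mxdot trmx_mul trmxK mulmxA. Qed.

Lemma mxdot_mxvec p q (A B : 'M[R]_(p, q)) : mxdot (mxvec A) (mxvec B) = mxdot A B.
Proof.
rewrite !mxdotE big_ord1 (reindex (uncurry (@mxvec_index p q))) /=; last first.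
  by case: (curry_mxvec_bij p q) => f h1 h2; exists f => x _; [apply: h1|apply: h2].
by rewrite pair_bigA; apply: eq_bigr => -[i j] _; rewrite !mxvecE.
Qed.

End FrobeniusProduct.

Section QuadraticForms.
Variable R : realFieldType.

Lemma mxdot_mulmxl p q s (A : 'M[R]_(p, s)) (B : 'M[R]_(s, q)) (D : 'M[R]_(p, q)) :
  mxdot D (A *m B) = mxdot (D *m B^T) A.
Proof. by rewrite /mxdot mulmxA mxtrace_mulC trmx_mul trmxK mulmxA. Qed.

Lemma mxdot_row N (u v : 'rV[R]_N) : mxdot u v = \sum_k u 0 k * v 0 k.
Proof. by rewrite mxdotE big_ord1. Qed.

Lemma quad_le_sum_norm N (H : 'M[R]_N) (u : 'rV[R]_N) :
  mxdot u (u *m H) <= (\sum_k \sum_l `|H k l|) * mxdot u u.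
Proof.
rewrite [mxdot u (u *m H)]mxdot_row.
under eq_bigr => l _ do rewrite mxE mulr_sumr.
rewrite mulr_suml exchange_big /=.
apply: ler_sum => k _; rewrite mulr_suml; apply: ler_sum => l _.
have hk := sqr_le_mxdot u 0 k; have hl := sqr_le_mxdot u 0 l.
set a := u 0 k in hk *; set b := u 0 l in hl *; set h := H k l.
have amgm : 2 * (`|a| * `|b|) <= a ^+ 2 + b ^+ 2.
  have : 0 <= (`|a| - `|b|) ^+ 2 by apply: sqr_ge0.
  by rewrite -(real_normK (num_real a)) -(real_normK (num_real b)); nra.
have := ler_norm (a * (b * h)); rewrite !normrM.
have ha := normr_ge0 a; have hb := normr_ge0 b; have hh := normr_ge0 h.
rewrite mulrC -mulrA (mulrC h) => /le_trans; apply; nra.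
Qed.

Lemma mulmx_mxdot_bounded N (M : 'M[R]_N) : exists2 K, 0 < K &
  forall u : 'rV_N, mxdot (u *m M) (u *m M) <= K * mxdot u u.
Proof.
set K := \sum_k \sum_l `|(M *m M^T) k l|.
have K0 : 0 <= K by rewrite sumr_ge0 // => k _; rewrite sumr_ge0.
exists (K + 1) => [|u]; first lra.
rewrite mxdot_mulmxl -mulmxA mxdotC.
by apply: le_trans (quad_le_sum_norm _ u) _; rewrite ler_wpM2r ?mxdot_ge0 ?lerDl.
Qed.

Section PositiveDefinite.
Variables (N : nat) (M : 'M[R]_N).
Hypothesis M_selfadjoint : forall u v : 'rV_N, mxdot u (v *m M) = mxdot (u *m M) v.
Hypothesis M_psd : forall u : 'rV_N, 0 <= mxdot u (u *m M).
Hypothesis M_definite : forall u : 'rV_N, mxdot u (u *m M) = 0 -> u = 0.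

Lemma form_cauchy_schwarz (u v : 'rV_N) :
  mxdot u (v *m M) ^+ 2 <= mxdot u (u *m M) * mxdot v (v *m M).
Proof.
set A := mxdot u (u *m M); set B := mxdot u (v *m M); set C := mxdot v (v *m M).
have quad s : 0 <= A + 2 * s * B + s ^+ 2 * C.
  have := M_psd (u + s *: v).
  rewrite mulmxDl -scalemxAl !mxdotDl !mxdotDr !mxdotZl !mxdotZr.
  have -> : mxdot v (u *m M) = B by rewrite M_selfadjoint mxdotC.
  by move/le_trans; apply; rewrite le_eqVlt; apply/orP; left; apply/eqP; ring.
have A0 : 0 <= A by apply: M_psd.
have [C0|Cn0] := eqVneq C 0.
  rewrite C0 mulr0; have [->|Bn0] := eqVneq B 0; first by rewrite expr0n.
  have := quad (- (A + 1) / (2 * B)); rewrite C0 mulr0 addr0.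
  have -> : 2 * (- (A + 1) / (2 * B)) * B = - (A + 1) by field.
  lra.
have C_gt0 : 0 < C by rewrite lt_neqAle eq_sym Cn0 M_psd.
have := quad (- B / C).
have -> : A + 2 * (- B / C) * B + (- B / C) ^+ 2 * C = A - B ^+ 2 / C.
  by field; rewrite gt_eqF.
by rewrite subr_ge0 ler_pdivrMr.
Qed.

Lemma posdef_unitmx : M \in unitmx.
Proof.
rewrite -row_free_unit -kermx_eq0; apply/eqP/row_matrixP => k.
by rewrite row0; apply: M_definite; rewrite -row_mul mulmx_ker row0 mxdot0r.
Qed.

(* If [z = w M] then [|z|^2 = <w, z M>], and Cauchy-Schwarz for the form of [M]
   together with the entrywise bound on [M^-1] gives [|z|^4 <= K |z|^2 <z, z M>]. *)
Lemma posdef_coercive : exists2 c, 0 < c & forall u : 'rV_N, c * mxdot u u <= mxdot u (u *m M).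
Proof.
set K := \sum_k \sum_l `|(invmx M) k l|.
have K0 : 0 <= K by rewrite sumr_ge0 // => k _; rewrite sumr_ge0.
exists (K + 1)^-1 => [|z]; first by rewrite invr_gt0; lra.
set w := z *m invmx M.
have wM : w *m M = z by rewrite /w -mulmxA mulVmx ?mulmx1 ?posdef_unitmx.
have := form_cauchy_schwarz w z.
rewrite M_selfadjoint wM [mxdot w z]mxdotC.
have := quad_le_sum_norm (invmx M) z; rewrite -/K.
have := mxdot_ge0 z; have := M_psd z.
set D := mxdot z z; set P := mxdot z (z *m M) => P0 D0 DK DDKP.
rewrite mulrC ler_pdivrMr; last lra.
have [->|Dn0] := eqVneq D 0; first by nra.
have D_gt0 : 0 < D by rewrite lt_neqAle eq_sym Dn0.
have : D ^+ 2 <= K * D * P by apply: (le_trans DDKP); nra.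
nra.
Qed.

End PositiveDefinite.
End QuadraticForms.

Section Contraction.
Variables (R : realType) (a V : nat -> R) (c : R).
Hypotheses (c_gt0 : 0 < c) (V_ge0 : forall t, 0 <= V t) (a_gt0 : forall t, 0 < a t).

Lemma series_sub_ge0 T k : 0 <= series a (T + k)%N - series a T.
Proof.
elim: k => [|k IH]; first by rewrite addn0 subrr.
by rewrite addnS seriesSr addrAC addr_ge0 // ltW.
Qed.

Section ContractingTail.
Variable T : nat.
Hypothesis V_contract : forall t, (T <= t)%N -> V t.+1 <= (1 - c * a t) * V t.

(* The weight [1 + c (S t - S T)] grows at least as fast as [V t] shrinks. *)
Lemma contraction_weighted_le k :
  V (T + k)%N * (1 + c * (series a (T + k)%N - series a T)) <= V T.
Proof.
elim: k => [|k IH]; first by rewrite addn0 subrr mulr0 addr0 mulr1.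
rewrite addnS seriesSr.
have := V_contract (leq_addr k T); have := series_sub_ge0 T k.
have := V_ge0 (T + k); have := V_ge0 (T + k).+1; have := a_gt0 (T + k).
move: IH; set v := V (T + k)%N; set v' := V (T + k).+1; set b := a (T + k)%N.
set D := series a (T + k)%N - series a T => IH b0 v'0 v0 D0 contract.
have -> : series a (T + k)%N + b - series a T = D + b by rewrite /D; ring.
have w0 : 0 <= 1 + c * (D + b).
  by apply: addr_ge0 => //; apply: mulr_ge0; [exact: ltW | exact: addr_ge0 D0 (ltW b0)].
have : v' * (1 + c * (D + b)) <= (1 - c * b) * v * (1 + c * (D + b)).
  by rewrite ler_wpM2r.
have -> : (1 - c * b) * v * (1 + c * (D + b)) =
  v * (1 + c * D) - v * (c * b * c * D + c * b * (c * b)) by ring.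
have : 0 <= v * (c * b * c * D + c * b * (c * b)).
  by rewrite mulr_ge0 // addr_ge0 // !mulr_ge0 // ltW.
lra.
Qed.

Lemma contraction_cvg0 : series a @ \oo --> +oo -> V t @[t --> \oo] --> 0.
Proof.
move=> a_div; apply/cvgrPdist_lt => eps eps_gt0.
have [N _ SN] := (cvgryPge _).1 a_div (series a T + V T / (c * eps)).
exists (maxn T N) => // t /=; rewrite geq_max => /andP[Tt Nt].
have St := SN t Nt.
have := contraction_weighted_le (t - T); rewrite subnKC //.
have := V_ge0 T; have := V_ge0 t.
set S := series a t - series a T; set w := V T / (c * eps) in St *.
have cw : c * eps * w = V T by rewrite /w mulrC divfK // mulf_neq0 ?gt_eqF.
have w0 : 0 <= w by rewrite /w divr_ge0 // mulr_ge0 // ltW.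
have Sw : c * w <= c * S by rewrite ler_pM2l //; rewrite /S; lra.
rewrite sub0r normrN ger0_norm // => Vt0 VT0 bound; rewrite ltNge; apply/negP => epsV.
have cS0 : 0 <= c * S by apply: le_trans Sw; rewrite mulr_ge0 // ltW.
have : 0 <= (V t - eps) * (1 + c * S) by rewrite mulr_ge0 ?subr_ge0 // addr_ge0.
have : 0 <= eps * (c * S - c * w) by rewrite mulr_ge0 ?subr_ge0 // ltW.
nra.
Qed.

End ContractingTail.

Lemma eventually_contraction K :
  0 < K -> a t ^+ 2 @[t --> \oo] --> 0 ->
  (forall t, V t.+1 <= V t - 2 * a t * c * V t + a t ^+ 2 * K * V t) ->
  exists T, forall t, (T <= t)%N -> V t.+1 <= (1 - c * a t) * V t.
Proof.
move=> K_gt0 a2_cvg0 V_rec.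
have [T _ aT] := (cvgrPdist_lt _ _).1 a2_cvg0 ((c / K) ^+ 2) (exprn_gt0 2 (divr_gt0 c_gt0 K_gt0)).
exists T => t /aT /=; rewrite sub0r normrN ger0_norm ?sqr_ge0 // => a2_small.
have := V_rec t; have := V_ge0 t; have := a_gt0 t.
set b := a t; set v := V t => b0 v0.
have bK : b * K <= c.
  rewrite -ler_pdivlMr //; apply: ltW; rewrite ltNge; apply/negP => cKb.
  have cK0 : 0 <= c / K by rewrite divr_ge0 // ltW.
  move: a2_small cK0 cKb; set e := c / K => + e0 eb; rewrite ltNge => /negP; apply.
  by rewrite -subr_ge0 subr_sqr mulr_ge0 // ?subr_ge0 ?addr_ge0 // ltW.
have : b ^+ 2 * K * v <= b * c * v.
  by rewrite expr2 -!mulrA ler_pM2l // !mulrA ler_wpM2r.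
lra.
Qed.

End Contraction.

Section PositiveDefiniteIteration.
Variables (R : realType) (N : nat) (M : 'M[R]_N) (a : nat -> R) (u : nat -> 'rV[R]_N).
Hypothesis M_selfadjoint : forall u v : 'rV_N, mxdot u (v *m M) = mxdot (u *m M) v.
Hypothesis M_psd : forall u : 'rV_N, 0 <= mxdot u (u *m M).
Hypothesis M_definite : forall u : 'rV_N, mxdot u (u *m M) = 0 -> u = 0.
Hypothesis a_gt0 : forall t, 0 < a t.
Hypothesis u_rec : forall t, u t.+1 = u t - a t *: (u t *m M).

Lemma posdef_iteration_energy_le c K :
  0 < c -> (forall v : 'rV_N, c * mxdot v v <= mxdot v (v *m M)) ->
  (forall v : 'rV_N, mxdot (v *m M) (v *m M) <= K * mxdot v v) ->
  forall t, mxdot (u t.+1) (u t.+1) <=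
    mxdot (u t) (u t) - 2 * a t * c * mxdot (u t) (u t) + a t ^+ 2 * K * mxdot (u t) (u t).
Proof.
move=> c_gt0 coercive bounded t; rewrite u_rec.
rewrite !(mxdotBl, mxdotBr, mxdotZl, mxdotZr) [mxdot (u t *m M) (u t)]mxdotC.
have := coercive (u t); have := bounded (u t); have := a_gt0 t.
set P := mxdot (u t) (u t *m M); set Q := mxdot (u t *m M) (u t *m M).
set V := mxdot (u t) (u t); set b := a t => b0 QK cP.
have : b * (c * V) <= b * P by rewrite ler_pM2l.
have : b ^+ 2 * Q <= b ^+ 2 * (K * V) by rewrite ler_wpM2l ?sqr_ge0.
lra.
Qed.

Lemma posdef_iteration_cvg0 :
  series a @ \oo --> +oo -> cvgn (series (fun t => a t ^+ 2)) ->
  mxdot (u t) (u t) @[t --> \oo] --> 0.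
Proof.
move=> a_div a2_cvg.
have [c c_gt0 coercive] := posdef_coercive M_selfadjoint M_psd M_definite.
have [K K_gt0 bounded] := mulmx_mxdot_bounded M.
have V_ge0 t := mxdot_ge0 (u t).
have [T contract] := eventually_contraction c_gt0 V_ge0 a_gt0 K_gt0
  (cvg_series_cvg_0 a2_cvg) (posdef_iteration_energy_le c_gt0 coercive bounded).
exact: (contraction_cvg0 c_gt0 V_ge0 a_gt0 contract).
Qed.

End PositiveDefiniteIteration.

Lemma mxdot_le_cvg0 (R : realType) p q (y : nat -> 'M[R]_(p, q)) (V : nat -> R) :
  (forall t, mxdot (y t) (y t) <= V t) -> V t @[t --> \oo] --> 0 ->
  y t @[t --> \oo] --> (0 : 'M[R]_(p, q)).
Proof.
move=> yV V_cvg0; apply/cvgr0Pnorm_lt => eps eps_gt0.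
have [T _ VT] := (cvgrPdist_lt _ _).1 V_cvg0 (eps ^+ 2) (exprn_gt0 2 eps_gt0).
exists T => // t /VT /=; rewrite sub0r normrN => Vt.
change (mx_norm (y t) < eps); rewrite mx_normrE; apply: bigmax_lt => // -[i j] _ /=.
have := le_trans (sqr_le_mxdot (y t) i j) (yV t).
have := ler_norm (V t); rewrite -(real_normK (num_real (y t i j))).
have := normr_ge0 (y t i j); nra.
Qed.

Lemma sum_sub_mean (K : numFieldType) (V : lmodType K) m (s : 'I_m -> V) :
  \sum_i (s i - m%:R^-1 *: \sum_j s j) = 0.
Proof.
case: m s => [|m] s; first by rewrite big_ord0.
by rewrite sumrB sumr_const card_ord -scaler_nat scalerA mulfV ?pnatr_eq0 // scale1r subrr.
Qed.

Section Network.
Variables (R : realType) (m n : nat) (arc : rel 'I_m)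
  (rows : 'I_m -> 'I_m -> nat) (C : forall j i, 'M[R]_(rows j i, n)).
Hypothesis arc_sym : symmetric_graph arc.

Definition coupling i j : 'M[R]_n := (C i j)^T *m C i j + (C j i)^T *m C j i.

Definition laplacian (s : 'I_m -> 'cV[R]_n) i :=
  \sum_(j < m | arc j i) coupling i j *m (s i - s j).

(* Adding the sum of all agents makes the (singular) Laplacian positive definite,
   and leaves it unchanged on states whose agents sum to zero. *)
Definition laplacian_shift (s : 'I_m -> 'cV[R]_n) i := laplacian s i + \sum_j s j.

Definition state_dot (s s' : 'I_m -> 'cV[R]_n) := \sum_i mxdot (s i) (s' i).

Lemma couplingC i j : coupling i j = coupling j i.
Proof. by rewrite /coupling addrC. Qed.

Lemma tr_coupling i j : (coupling i j)^T = coupling i j.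
Proof. by rewrite /coupling linearD /= !trmx_mul !trmxK. Qed.

Lemma mxdot_coupling i j (d : 'cV[R]_n) :
  mxdot d (coupling i j *m d) = mxdot (C i j *m d) (C i j *m d) + mxdot (C j i *m d) (C j i *m d).
Proof. by rewrite /coupling mulmxDl mxdotDr -!mulmxA !mxdot_mulmxr !trmxK. Qed.

Lemma mxdot_coupling_ge0 i j (d : 'cV[R]_n) : 0 <= mxdot d (coupling i j *m d).
Proof. by rewrite mxdot_coupling addr_ge0 ?mxdot_ge0. Qed.

Lemma arcC i j : arc i j = arc j i.
Proof. by apply/idP/idP; apply: arc_sym. Qed.

Lemma sum_arcsC (V : zmodType) (F : 'I_m -> 'I_m -> V) :
  \sum_i \sum_(j | arc j i) F i j = \sum_i \sum_(j | arc j i) F j i.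
Proof.
rewrite (exchange_big_dep xpredT) //=.
by apply: eq_bigr => i _; apply: eq_bigl => j; rewrite arcC.
Qed.

Lemma sum_laplacian s : \sum_i laplacian s i = 0.
Proof.
have antisym : \sum_i laplacian s i = - \sum_i laplacian s i.
  rewrite [LHS](sum_arcsC (fun i j => coupling i j *m (s i - s j))) -sumrN.
  apply: eq_bigr => i _; rewrite -sumrN; apply: eq_bigr => j _.
  by rewrite couplingC -mulmxN opprB.
have : 2%:R *: \sum_i laplacian s i = 0 by rewrite scaler_nat mulr2n {2}antisym subrr.
by move/eqP; rewrite scaler_eq0 pnatr_eq0 => /eqP.
Qed.

Lemma state_dot_laplacian z y : 2 * state_dot z (laplacian y) =
  \sum_i \sum_(j | arc j i) mxdot (z i - z j) (coupling i j *m (y i - y j)).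
Proof.
have -> : state_dot z (laplacian y) =
    \sum_i \sum_(j | arc j i) mxdot (z i) (coupling i j *m (y i - y j)).
  by apply: eq_bigr => i _; rewrite mxdot_sumr.
rewrite mulr2n mulrDl mul1r {2}sum_arcsC -big_split /=; apply: eq_bigr => i _.
rewrite -big_split /=; apply: eq_bigr => j _.
by rewrite couplingC -[y j - y i]opprB mulmxN mxdotNr mxdotBl.
Qed.

Lemma state_dotC z y : state_dot z y = state_dot y z.
Proof. by apply: eq_bigr => i _; rewrite mxdotC. Qed.

Lemma state_dot_laplacianC z y : state_dot z (laplacian y) = state_dot y (laplacian z).
Proof.
apply: (@mulfI _ 2); first by rewrite pnatr_eq0.
rewrite !state_dot_laplacian; apply: eq_bigr => i _; apply: eq_bigr => j _.
by rewrite mxdot_mulmxr tr_coupling mxdotC.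
Qed.

Lemma state_dot_laplacian_shift z y :
  state_dot z (laplacian_shift y) = state_dot z (laplacian y) + mxdot (\sum_i z i) (\sum_i y i).
Proof. by rewrite /state_dot mxdot_suml -big_split; apply: eq_bigr => i _; rewrite mxdotDr. Qed.

Lemma state_dot_laplacian_shiftC z y :
  state_dot z (laplacian_shift y) = state_dot (laplacian_shift z) y.
Proof.
by rewrite [RHS]state_dotC !state_dot_laplacian_shift state_dot_laplacianC mxdotC.
Qed.

Lemma laplacian_psd y : 0 <= state_dot y (laplacian y).
Proof.
rewrite -(pmulr_rge0 _ (ltr0Sn R 1)) state_dot_laplacian.
by rewrite sumr_ge0 // => i _; rewrite sumr_ge0 // => j _; rewrite mxdot_coupling_ge0.
Qed.

Lemma laplacian_shift_psd y : 0 <= state_dot y (laplacian_shift y).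
Proof. by rewrite state_dot_laplacian_shift addr_ge0 ?laplacian_psd ?mxdot_ge0. Qed.

Lemma laplacian_eq0_agree y : state_dot y (laplacian y) = 0 ->
  forall i j, arc j i -> C j i *m y i = C j i *m y j.
Proof.
move=> L0; have /eqP : 2 * state_dot y (laplacian y) = 0 by rewrite L0 mulr0.
rewrite state_dot_laplacian psumr_eq0 => [/allP agree i j ji|i _]; last first.
  by rewrite sumr_ge0 // => j _; rewrite mxdot_coupling_ge0.
have := agree i (mem_index_enum i); rewrite psumr_eq0 => [/allP /(_ j)|k _].
  rewrite mem_index_enum ji => /(_ isT) /eqP; rewrite mxdot_coupling.
  move=> /eqP; rewrite paddr_eq0 ?mxdot_ge0 // => /andP[_].
  by rewrite mxdot_eq0 mulmxBr subr_eq0 => /eqP.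
exact: mxdot_coupling_ge0.
Qed.

Lemma laplacian_subr s v : laplacian (fun i => s i - v) = laplacian s.
Proof. by apply: funext => i; apply: eq_bigr => j _; rewrite opprB addrA subrK. Qed.

Lemma mxdot_le_state_dot s i : mxdot (s i) (s i) <= state_dot s s.
Proof. by rewrite /state_dot (bigD1 i) //= lerDl sumr_ge0 // => j _; rewrite mxdot_ge0. Qed.

Hypothesis C_wc : well_configured arc C.

Lemma laplacian_shift_definite y : state_dot y (laplacian_shift y) = 0 -> y = (fun _ => 0).
Proof.
rewrite state_dot_laplacian_shift => /eqP.
rewrite paddr_eq0 ?laplacian_psd ?mxdot_ge0 // mxdot_eq0 => /andP[/eqP L0 /eqP sum0].
have yC := C_wc (laplacian_eq0_agree L0).
apply: funext => i; move: sum0.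
rewrite (eq_bigr (fun _ => y i)) => [|j _]; last exact: yC.
rewrite sumr_const card_ord -scaler_nat => /eqP; rewrite scaler_eq0 pnatr_eq0.
case/orP => [/eqP m0|/eqP //]; by move: (ltn_ord i); rewrite [X in (_ < X)%N]m0.
Qed.

End Network.

Section Vectorization.
Variables (R : realType) (m n : nat).
Implicit Types u v : 'rV[R]_(n * m).

Definition vecs (s : 'I_m -> 'cV[R]_n) : 'rV[R]_(n * m) := mxvec (\matrix_(a, i) s i a 0).
Definition unvec (u : 'rV[R]_(n * m)) : 'I_m -> 'cV[R]_n := fun i => col i (vec_mx u).

Lemma unvecK : cancel vecs unvec.
Proof.
move=> s; apply: funext => i; rewrite /unvec /vecs mxvecK.
by apply/matrixP => a b; rewrite (ord1 b) !mxE.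
Qed.

Lemma vecsK : cancel unvec vecs.
Proof.
move=> u; rewrite /vecs /unvec -[RHS]vec_mxK; congr mxvec.
by apply/matrixP => a b; rewrite !mxE.
Qed.

Lemma vecs_lin a s s' : vecs (fun i => a *: s i + s' i) = a *: vecs s + vecs s'.
Proof. by rewrite /vecs -linearP; congr mxvec; apply/matrixP => b i; rewrite !mxE. Qed.

Lemma unvec_lin a u v : unvec (a *: u + v) = (fun i => a *: unvec u i + unvec v i).
Proof. by apply: funext => i; apply/matrixP => b c; rewrite !mxE. Qed.

Lemma mxdot_vecs s s' : mxdot (vecs s) (vecs s') = state_dot s s'.
Proof.
rewrite mxdot_mxvec mxdotE exchange_big; apply: eq_bigr => i _.
by rewrite mxdotE; apply: eq_bigr => a _; rewrite big_ord1 !mxE.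
Qed.

Variables (arc : rel 'I_m) (rows : 'I_m -> 'I_m -> nat) (C : forall j i, 'M[R]_(rows j i, n)).

Lemma laplacian_shift_lin a s s' :
  laplacian_shift arc C (fun i => a *: s i + s' i) =
  (fun i => a *: laplacian_shift arc C s i + laplacian_shift arc C s' i).
Proof.
apply: funext => i; rewrite /laplacian_shift /laplacian scalerDr addrACA.
rewrite !scaler_sumr -!big_split /=; congr (_ + _); apply: eq_bigr => j _.
by rewrite scalemxAr -mulmxDr scalerBr opprD addrACA.
Qed.

Definition laplacian_map (u : 'rV[R]_(n * m)) := vecs (laplacian_shift arc C (unvec u)).

Fact laplacian_map_is_linear : linear laplacian_map.
Proof. by move=> a u v; rewrite /laplacian_map unvec_lin laplacian_shift_lin vecs_lin. Qed.

HB.instance Definition _ :=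
  GRing.isLinear.Build R _ _ _ laplacian_map laplacian_map_is_linear.

Definition laplacian_mx := lin1_mx laplacian_map.

Lemma mul_vecs_laplacian_mx s :
  vecs s *m laplacian_mx = vecs (laplacian_shift arc C s).
Proof. by rewrite mul_rV_lin1 /= /laplacian_map unvecK. Qed.

Lemma mxdot_laplacian_mx u v :
  mxdot u (v *m laplacian_mx) = state_dot (unvec u) (laplacian_shift arc C (unvec v)).
Proof. by rewrite mul_rV_lin1 -{1}[u]vecsK mxdot_vecs. Qed.

Hypothesis arc_sym : symmetric_graph arc.

Lemma laplacian_mx_selfadjoint u v :
  mxdot u (v *m laplacian_mx) = mxdot (u *m laplacian_mx) v.
Proof.
by rewrite [RHS]mxdotC !mxdot_laplacian_mx state_dot_laplacian_shiftC // [LHS]state_dotC.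
Qed.

Lemma laplacian_mx_psd u : 0 <= mxdot u (u *m laplacian_mx).
Proof. by rewrite mxdot_laplacian_mx laplacian_shift_psd. Qed.

Lemma laplacian_mx_definite : well_configured arc C ->
  forall u, mxdot u (u *m laplacian_mx) = 0 -> u = 0.
Proof.
move=> C_wc u; rewrite mxdot_laplacian_mx => /laplacian_shift_definite -/(_ arc_sym C_wc) u0.
by rewrite -[u]vecsK u0 /vecs -(linear0 (@mxvec R n m)); congr mxvec; apply/matrixP => a i; rewrite !mxE.
Qed.

End Vectorization.

Theorem theorem4 (R : realType) (m n : nat) (arc : rel 'I_m)
  (rows : 'I_m -> 'I_m -> nat) (C : forall j i, 'M[R]_(rows j i, n))
  (alpha : nat -> R) (x : nat -> 'I_m -> 'cV[R]_n) :
  symmetric_graph arc -> no_self_arcs arc -> strongly_connected arc ->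
  well_configured arc C ->
  (forall t, 0 < alpha t) ->
  series alpha @ \oo --> +oo ->
  cvgn (series (fun t => alpha t ^+ 2)) ->
  (forall t i, x t.+1 i =
     x t i - alpha t *: \sum_(j < m | arc j i)
        (((C i j)^T *m C i j + (C j i)^T *m C j i) *m (x t i - x t j))) ->
  exists xstar : 'cV[R]_n, forall i, x t i @[t --> \oo] --> xstar.
Proof.
move=> arc_sym _ _ C_wc alpha_gt0 alpha_div alpha2_cvg x_rec.
have {}x_rec t i : x t.+1 i = x t i - alpha t *: laplacian arc C (x t) i := x_rec t i.
set xbar := m%:R^-1 *: \sum_i x 0 i.
have sum_x t : \sum_i x t i = \sum_i x 0 i.
  elim: t => // t IH; under eq_bigr do rewrite x_rec.
  by rewrite sumrB -scaler_sumr sum_laplacian // scaler0 subr0.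
pose y t i := x t i - xbar.
have y_rec t : y t.+1 = (fun i => - alpha t *: laplacian_shift arc C (y t) i + y t i).
  apply: funext => i; rewrite /laplacian_shift laplacian_subr.
  by rewrite /y /xbar -(sum_x t) sum_sub_mean addr0 x_rec scaleNr addrAC addrC.
have u_rec k : vecs (y k.+1) = vecs (y k) - alpha k *: (vecs (y k) *m laplacian_mx arc C).
  by rewrite y_rec vecs_lin mul_vecs_laplacian_mx scaleNr addrC.
have energy_cvg0 := posdef_iteration_cvg0 (laplacian_mx_selfadjoint C arc_sym)
  (laplacian_mx_psd C arc_sym) (laplacian_mx_definite arc_sym C_wc) alpha_gt0 u_rec
  alpha_div alpha2_cvg.
exists xbar => i; apply/subr_cvg0; apply: mxdot_le_cvg0 energy_cvg0 => t.
by rewrite mxdot_vecs; apply: mxdot_le_state_dot.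
Qed.
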